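(* Let $\epsilon,A\in\mathbb{R}$ with $\epsilon\neq0$, $A\neq 0$, and let $f:\mathbb{R}^4\to\mathbb{R}^4$ be $$f(x,y,z,w)=\Big(y,\,z,\,w,\,-x-\tfrac{1}{A}y+\tfrac{2}{A}z-\tfrac{1}{\epsilon A}z^3-\tfrac{1}{A}w\Big).$$ Then the non-wandering set of $f$ is contained in the cube $[-R,R]^4$, where $R=\sqrt{|\epsilon A|\big(2+\tfrac{4}{|A|}\big)}$.
   Context: The non-wandering set of $f$ is the set of points $q$ such that for every neighbourhood $U$ of $q$ there is $k\geq1$ with $f^k(U)\cap U\neq\emptyset$. *)

From Stdlib Require Import Reals.
Open Scope R_scope.

Definition R4 : Type := (R * R * R * R)%type.

(* Sup-norm distance on R^4 (induces the standard topology). *)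
Definition dist4 (p q : R4) : R :=
  let '(a1, a2, a3, a4) := p in
  let '(b1, b2, b3, b4) := q in
  Rmax (Rmax (Rabs (a1 - b1)) (Rabs (a2 - b2))) (Rmax (Rabs (a3 - b3)) (Rabs (a4 - b4))).

Definition nbhd4 (q : R4) (U : R4 -> Prop) : Prop :=
  exists r, 0 < r /\ forall p, dist4 p q < r -> U p.

Fixpoint iter4 (f : R4 -> R4) (k : nat) (p : R4) : R4 :=
  match k with
  | O => p
  | S k' => f (iter4 f k' p)
  end.

Definition nonwandering (f : R4 -> R4) (q : R4) : Prop :=
  forall U : R4 -> Prop, nbhd4 q U ->
    exists k : nat, (1 <= k)%nat /\ exists p, U p /\ U (iter4 f k p).

Definition fmap (eps A : R) (p : R4) : R4 :=
  let '(x, y, z, w) := p in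
  (y, z, w, - x - (1 / A) * y + (2 / A) * z - (1 / (eps * A)) * z ^ 3 - (1 / A) * w).

Definition in_cube (R0 : R) (p : R4) : Prop :=
  let '(x, y, z, w) := p in
  -R0 <= x <= R0 /\ -R0 <= y <= R0 /\ -R0 <= z <= R0 /\ -R0 <= w <= R0.

(** Along an orbit, the coordinates form a sequence (u_n) with
    eps A (u_(n+4) + u_n) + eps (u_(n+1) + u_(n+3)) - 2 eps u_(n+2) + u_(n+2)^3 = 0.
    Once |u_(n+2)| exceeds some T > sqrt K, with K = |eps| (2|A| + 4), and dominates
    u_n, u_(n+1), u_(n+3) up to a small margin s, the cubic term forces
    |u_(n+4)| >= |u_(n+2)| + s.  So if the larger of the last two coordinates of p is
    large and dominates the first two, it never decreases along the orbit and grows by s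
    every two steps: the orbit cannot come back near p after k >= 2 steps.  The relation
    is invariant under reversing time, which handles the case where the first two
    coordinates dominate, and k = 1 is excluded because p would then be almost fixed, which
    the same estimate forbids at large norm. *)

From Stdlib Require Import Reals Lra Lia.
Open Scope R_scope.

Ltac case_Rmax :=
  repeat match goal with
  | |- context [Rmax ?a ?b] =>
      destruct (Rle_dec a b); [rewrite (Rmax_right a b) by lra | rewrite (Rmax_left a b) by lra]
  | H : context [Rmax ?a ?b] |- _ =>
      destruct (Rle_dec a b); [rewrite (Rmax_right a b) in H by lra | rewrite (Rmax_left a b) in H by lra]
  end.

Lemma iter4_succ_r f n p : iter4 f (S n) p = iter4 f n (f p).
Proof.
  revert p; induction n as [|n IH]; intros p; [reflexivity|].
  simpl in *; rewrite <- IH; reflexivity.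
Qed.

Definition head4 (p : R4) : R := let '(a, b, _, _) := p in Rmax (Rabs a) (Rabs b).
Definition tail4 (p : R4) : R := let '(_, _, c, d) := p in Rmax (Rabs c) (Rabs d).
Definition norm4 (p : R4) : R := Rmax (head4 p) (tail4 p).
Definition rev4 (p : R4) : R4 := let '(a, b, c, d) := p in (d, c, b, a).

Lemma head4_rev4 p : head4 (rev4 p) = tail4 p.
Proof. destruct p as [[[a b] c] d]; apply Rmax_comm. Qed.

Lemma tail4_rev4 p : tail4 (rev4 p) = head4 p.
Proof. destruct p as [[[a b] c] d]; apply Rmax_comm. Qed.

Lemma dist4_lt a1 a2 a3 a4 b1 b2 b3 b4 r :
  dist4 (a1, a2, a3, a4) (b1, b2, b3, b4) < r <->
  Rabs (a1 - b1) < r /\ Rabs (a2 - b2) < r /\ Rabs (a3 - b3) < r /\ Rabs (a4 - b4) < r.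
Proof.
  unfold dist4; split.
  - intros hd; case_Rmax; repeat split; lra.
  - intros (h1 & h2 & h3 & h4); repeat apply Rmax_lub_lt; assumption.
Qed.

Lemma Rmax_close a b a' b' r :
  Rabs (a - a') < r -> Rabs (b - b') < r -> Rabs (Rmax a b - Rmax a' b') < r.
Proof.
  intros ha hb; apply Rabs_def2 in ha, hb; apply Rabs_def1; case_Rmax; lra.
Qed.

Lemma Rabs_close a a' r : Rabs (a - a') < r -> Rabs (Rabs a - Rabs a') < r.
Proof. apply Rle_lt_trans, Rabs_triang_inv2. Qed.

Lemma dist4_head4_tail4 p q r : dist4 p q < r ->
  Rabs (head4 p - head4 q) < r /\ Rabs (tail4 p - tail4 q) < r.
Proof.
  destruct p as [[[a1 a2] a3] a4], q as [[[b1 b2] b3] b4].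
  intros (h1 & h2 & h3 & h4)%dist4_lt.
  split; apply Rmax_close; apply Rabs_close; assumption.
Qed.

Lemma dist4_norm4 p q r : dist4 p q < r -> Rabs (norm4 p - norm4 q) < r.
Proof. intros [hh ht]%dist4_head4_tail4; apply Rmax_close; assumption. Qed.

Definition cube_radius_sq (eps A : R) : R := Rabs eps * (2 * Rabs A + 4).

Section Dynamics.

Variables eps A : R.
Hypothesis eps_neq0 : eps <> 0.
Hypothesis A_neq0 : A <> 0.

Definition next (a b c d : R) : R :=
  - a - (1 / A) * b + (2 / A) * c - (1 / (eps * A)) * c ^ 3 - (1 / A) * d.

Lemma fmap_eq a b c d : fmap eps A (a, b, c, d) = (b, c, d, next a b c d).
Proof. reflexivity. Qed.

Lemma next_relation a b c d :
  eps * A * next a b c d + eps * A * a + eps * b - 2 * eps * c + c ^ 3 + eps * d = 0.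
Proof. unfold next; field; auto. Qed.

(* [next_relation] is unchanged by reversing the word (a, b, c, d, next a b c d), so the
   inverse of [fmap] is [rev4 \o fmap \o rev4]. *)
Lemma next_rev a b c d : next (next a b c d) d c b = a.
Proof. unfold next; field; auto. Qed.

Lemma fmap_rev4 p : fmap eps A (rev4 (fmap eps A p)) = rev4 p.
Proof.
  destruct p as [[[a b] c] d]; rewrite fmap_eq; simpl rev4; rewrite fmap_eq, next_rev; reflexivity.
Qed.

Lemma iter4_fmap_rev4 n p :
  iter4 (fmap eps A) n (rev4 (iter4 (fmap eps A) n p)) = rev4 p.
Proof.
  induction n as [|n IH]; [reflexivity|].
  rewrite iter4_succ_r; simpl iter4 at 2; rewrite fmap_rev4; exact IH.
Qed.

Section Escape.

Variables T s : R.

Let K := cube_radius_sq eps A.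

Hypothesis T_ge0 : 0 <= T.
Hypothesis K_le_3T2 : K <= 3 * T ^ 2.
Hypothesis s_ge0 : 0 <= s.
Hypothesis margin : Rabs eps * (2 * Rabs A + 2) * s <= T * (T ^ 2 - K).

Lemma escape_step x y u v w :
  eps * A * x + eps * A * y + eps * u - 2 * eps * v + v ^ 3 + eps * w = 0 ->
  T <= Rabs v -> Rabs y <= Rabs v + s -> Rabs u <= Rabs v + s -> Rabs w <= Rabs v + s ->
  Rabs v + s <= Rabs x.
Proof.
  intros hrel hT hy hu hw.
  assert (eps_pos : 0 < Rabs eps) by (apply Rabs_pos_lt; assumption).
  assert (A_pos : 0 < Rabs A) by (apply Rabs_pos_lt; assumption).
  assert (cube : Rabs v ^ 3 <= Rabs eps *
            (Rabs A * Rabs x + Rabs A * Rabs y + Rabs u + 2 * Rabs v + Rabs w)).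
  { rewrite RPow_abs.
    replace (v ^ 3) with (- (eps * (A * x + A * y + u + - (2 * v) + w))) by lra.
    rewrite Rabs_Ropp, Rabs_mult.
    apply Rmult_le_compat_l; [lra|].
    pose proof (Rabs_triang (A * x + A * y + u + - (2 * v)) w).
    pose proof (Rabs_triang (A * x + A * y + u) (- (2 * v))).
    pose proof (Rabs_triang (A * x + A * y) u).
    pose proof (Rabs_triang (A * x) (A * y)).
    rewrite Rabs_Ropp, !Rabs_mult, (Rabs_right 2) in * by lra.
    lra. }
  assert (monotone : T * (T ^ 2 - K) <= Rabs v * (Rabs v ^ 2 - K)).
  { assert (0 <= (Rabs v - T) * (Rabs v ^ 2 + Rabs v * T + T ^ 2 - K)).
    { apply Rmult_le_pos; nra. }
    nra. }
  apply (Rmult_le_reg_l (Rabs eps * Rabs A)); [nra|].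
  assert (Rabs A * Rabs y <= Rabs A * (Rabs v + s)) by (apply Rmult_le_compat_l; lra).
  unfold K, cube_radius_sq in *; nra.
Qed.

Definition escaping (p : R4) : Prop := T <= tail4 p /\ head4 p <= tail4 p + s.

Lemma escaping_fmap p :
  escaping p -> escaping (fmap eps A p) /\ tail4 p <= tail4 (fmap eps A p).
Proof.
  destruct p as [[[a b] c] d]; rewrite fmap_eq; unfold escaping; simpl.
  pose proof (next_relation a b c d); set (e := next a b c d) in *.
  intros [hT hs].
  destruct (Rle_dec (Rabs d) (Rabs c)).
  - assert (Rabs c + s <= Rabs e) by (apply (escape_step e a b c d); case_Rmax; lra).
    case_Rmax; lra.
  - case_Rmax; lra.
Qed.

Lemma escaping_fmap2 p :
  escaping p -> tail4 p + s <= tail4 (fmap eps A (fmap eps A p)).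
Proof.
  destruct p as [[[a b] c] d]; rewrite !fmap_eq; unfold escaping; simpl.
  pose proof (next_relation a b c d); set (e := next a b c d) in *.
  pose proof (next_relation b c d e); set (g := next b c d e) in *.
  intros [hT hs].
  destruct (Rle_dec (Rabs d) (Rabs c)).
  - assert (Rabs c + s <= Rabs e) by (apply (escape_step e a b c d); case_Rmax; lra).
    case_Rmax; lra.
  - destruct (Rle_dec (Rabs d + s) (Rabs e)); [case_Rmax; lra|].
    assert (Rabs d + s <= Rabs g) by (apply (escape_step g b c d e); case_Rmax; lra).
    case_Rmax; lra.
Qed.

Lemma escaping_iter4 n p : escaping p ->
  escaping (iter4 (fmap eps A) n p) /\ tail4 p <= tail4 (iter4 (fmap eps A) n p).
Proof.
  intros hp; induction n as [|n [hn hle]]; [simpl; split; [assumption | lra]|].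
  destruct (escaping_fmap _ hn); simpl; split; [assumption | lra].
Qed.

Lemma escaping_tail4_iter4 n p : escaping p -> (2 <= n)%nat ->
  tail4 p + s <= tail4 (iter4 (fmap eps A) n p).
Proof.
  intros hp hn; induction hn as [|n hn IH].
  - exact (escaping_fmap2 p hp).
  - destruct (escaping_iter4 n p hp) as [hn' _].
    destruct (escaping_fmap _ hn'); simpl; lra.
Qed.

Lemma norm4_lt_of_slow_step p : dist4 (fmap eps A p) p < s / 2 -> norm4 p < T + s.
Proof.
  destruct p as [[[a b] c] d]; rewrite fmap_eq.
  pose proof (next_relation a b c d); set (e := next a b c d) in *.
  intros (hab & hbc & hcd & hde)%dist4_lt; apply Rabs_def2 in hab, hbc, hcd, hde.
  assert (Rabs (a - c) < s) by (apply Rabs_def1; lra).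
  assert (Rabs (b - c) < s) by (apply Rabs_def1; lra).
  assert (Rabs (d - c) < s / 2) by (apply Rabs_def1; lra).
  assert (Rabs (e - d) < s / 2) by (apply Rabs_def1; lra).
  pose proof (Rabs_triang_inv a c); pose proof (Rabs_triang_inv b c).
  pose proof (Rabs_triang_inv d c); pose proof (Rabs_triang_inv e d).
  assert (hc : Rabs c < T).
  { apply Rnot_le_lt; intros hT.
    assert (Rabs c + s <= Rabs e) by (apply (escape_step e a b c d); lra).
    lra. }
  unfold norm4; simpl; repeat apply Rmax_lub_lt; lra.
Qed.

(* Needed separately: in a single step the tail maximum need not increase. *)
Lemma no_return_once p q : T + 2 * s <= norm4 q ->
  dist4 p q < s / 4 -> dist4 (fmap eps A p) q < s / 4 -> False.
Proof.
  intros hq hp hfp.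
  assert (slow : dist4 (fmap eps A p) p < s / 2).
  { destruct p as [[[a b] c] d], q as [[[q1 q2] q3] q4]; rewrite fmap_eq in *.
    apply dist4_lt in hp as (h1 & h2 & h3 & h4), hfp as (h1' & h2' & h3' & h4').
    apply Rabs_def2 in h1, h2, h3, h4, h1', h2', h3', h4'.
    apply dist4_lt; repeat split; apply Rabs_def1; lra. }
  pose proof (norm4_lt_of_slow_step p slow).
  apply dist4_norm4, Rabs_def2 in hp; lra.
Qed.

Lemma no_return_forward k p q : (2 <= k)%nat -> T + 2 * s <= norm4 q ->
  head4 q <= tail4 q -> dist4 p q < s / 4 -> dist4 (iter4 (fmap eps A) k p) q < s / 4 -> False.
Proof.
  intros hk hq hhead hp hkp.
  apply dist4_head4_tail4 in hp as [hph hpt], hkp as [_ hkpt].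
  apply Rabs_def2 in hph, hpt, hkpt.
  unfold norm4 in hq; rewrite Rmax_right in hq by lra.
  assert (hesc : escaping p) by (split; lra).
  pose proof (escaping_tail4_iter4 k p hesc hk); lra.
Qed.

Lemma no_return_backward k p q : (2 <= k)%nat -> T + 2 * s <= norm4 q ->
  tail4 q <= head4 q -> dist4 p q < s / 4 -> dist4 (iter4 (fmap eps A) k p) q < s / 4 -> False.
Proof.
  intros hk hq htail hp hkp.
  set (y := iter4 (fmap eps A) k p) in *.
  apply dist4_head4_tail4 in hp as [hph _], hkp as [hkph hkpt].
  apply Rabs_def2 in hph, hkph, hkpt.
  unfold norm4 in hq; rewrite Rmax_left in hq by lra.
  assert (hesc : escaping (rev4 y)) by (unfold escaping; rewrite head4_rev4, tail4_rev4; lra).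
  pose proof (escaping_tail4_iter4 k (rev4 y) hesc hk) as hgrow.
  unfold y in hgrow; rewrite iter4_fmap_rev4, !tail4_rev4 in hgrow; fold y in hgrow; lra.
Qed.

Lemma no_return k p q : (1 <= k)%nat -> T + 2 * s <= norm4 q ->
  dist4 p q < s / 4 -> dist4 (iter4 (fmap eps A) k p) q < s / 4 -> False.
Proof.
  intros hk hq hp hkp; destruct k as [|[|k]]; [lia | exact (no_return_once p q hq hp hkp) |].
  destruct (Rle_dec (head4 q) (tail4 q)).
  - apply (no_return_forward (S (S k)) p q); auto; lia.
  - apply (no_return_backward (S (S k)) p q); auto; [lia | lra].
Qed.

End Escape.

End Dynamics.

Lemma escape_parameters eps A m : eps <> 0 -> A <> 0 -> sqrt (cube_radius_sq eps A) < m ->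
  exists T s, 0 < s /\ 0 <= T /\ cube_radius_sq eps A <= 3 * T ^ 2 /\
    Rabs eps * (2 * Rabs A + 2) * s <= T * (T ^ 2 - cube_radius_sq eps A) /\
    T + 2 * s <= m.
Proof.
  intros eps_neq0 A_neq0; set (K := cube_radius_sq eps A); intros hm.
  assert (eps_pos : 0 < Rabs eps) by (apply Rabs_pos_lt; assumption).
  assert (A_pos : 0 < Rabs A) by (apply Rabs_pos_lt; assumption).
  assert (K_pos : 0 < K) by (unfold K, cube_radius_sq; nra).
  set (R0 := sqrt K) in *.
  assert (R0_pos : 0 < R0) by (apply sqrt_lt_R0; lra).
  assert (R0_sq : R0 * R0 = K) by (apply sqrt_sqrt; lra).
  set (T := (m + R0) / 2).
  assert (R0_lt_T : R0 < T) by (unfold T; lra).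
  set (P := T * (T ^ 2 - K)).
  assert (P_pos : 0 < P) by (apply Rmult_lt_0_compat; nra).
  set (c := Rabs eps * (2 * Rabs A + 2)).
  assert (c_pos : 0 < c) by (unfold c; nra).
  exists T, (Rmin ((m - R0) / 4) (P / c)).
  pose proof (Rmin_l ((m - R0) / 4) (P / c)) as s_le_gap.
  pose proof (Rmin_r ((m - R0) / 4) (P / c)) as s_le_P.
  repeat split.
  - apply Rmin_glb_lt; [lra | apply Rdiv_lt_0_compat; assumption].
  - lra.
  - nra.
  - apply (Rle_trans _ (c * (P / c))); [apply Rmult_le_compat_l; lra | right; unfold P; field; lra].
  - unfold T; lra.
Qed.

Lemma in_cube_of_norm4 r q : norm4 q <= r -> in_cube r q.
Proof.
  destruct q as [[[q1 q2] q3] q4]; unfold norm4; simpl; intros hq.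
  assert (bounds : forall x, Rabs x <= r -> - r <= x <= r).
  { intros x hx; pose proof (Rle_abs x); pose proof (Rle_abs (- x)); rewrite Rabs_Ropp in *; lra. }
  refine (conj (bounds q1 _) (conj (bounds q2 _) (conj (bounds q3 _) (bounds q4 _))));
    case_Rmax; lra.
Qed.

Theorem proposition2 (eps A : R) (heps : eps <> 0) (hA : A <> 0) :
  forall q : R4, nonwandering (fmap eps A) q ->
    in_cube (sqrt (Rabs (eps * A) * (2 + 4 / Rabs A))) q.
Proof.
  intros q hq.
  replace (Rabs (eps * A) * (2 + 4 / Rabs A)) with (cube_radius_sq eps A)
    by (unfold cube_radius_sq; rewrite Rabs_mult; field; apply Rabs_no_R0; exact hA).
  destruct (Rle_lt_dec (norm4 q) (sqrt (cube_radius_sq eps A))) as [small | large].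
  { apply in_cube_of_norm4; exact small. }
  destruct (escape_parameters eps A (norm4 q) heps hA large)
    as (T & s & s_pos & T_ge0 & K_le_3T2 & margin & room).
  destruct (hq (fun p => dist4 p q < s / 4)) as (k & hk & p & hp & hkp).
  { exists (s / 4); split; [lra | tauto]. }
  exfalso; exact (no_return eps A heps hA T s T_ge0 K_le_3T2 (Rlt_le _ _ s_pos) margin
                    k p q hk room hp hkp).
Qed.
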